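(* Let $A$ be a real nonsingular tridiagonal $n\times n$ matrix with diagonal entries $A_{i,i}=b_i$ ($i=1,\dots,n$), subdiagonal entries $A_{i+1,i}=a_i$ and superdiagonal entries $A_{i,i+1}=c_i$ ($i=1,\dots,n-1$), let $\mathbf F\in\mathbb R^n$ and let $\mathbf X$ be the solution of $A\mathbf X=\mathbf F$. Let $p\ge 1$ and let $n_1<n_2<\dots<n_p$ be integers with $1<n_1$ and $n_p<n$; set $n_0=1$ and $n_{p+1}=n+1$. Assume that the matrices $B^L_{n_i}$ and $B^R_{n_i}$ (defined below) are nonsingular for $i=1,\dots,p$, and let $\mathbf Z^L_{n_i}$, $\mathbf Z^R_{n_i}$ be the solutions of $B^L_{n_i}\mathbf Z^L_{n_i}=\mathbf e^L$ and $B^R_{n_i}\mathbf Z^R_{n_i}=\mathbf e^R$. Define $$\beta^L_{n_j}=\sum_{l=n_{j-1}}^{n_j-1}(\mathbf F)_l\,(A^{-1})_{n_{j-1},l}\quad (j=2,\dots,p+1),\qquad \beta^R_{n_j}=\sum_{l=n_{j-1}}^{n_j-1}(\mathbf F)_l\,(A^{-1})_{n_j,l}\quad (j=1,\dots,p).$$ Then for every $i=1,\dots,p$, $$(\mathbf X)_{n_i}=\sum_{j=1}^{i}\beta^R_{n_j}\,(\mathbf Z^R_{n_j})_{n_i}+\sum_{j=i+1}^{p+1}\beta^L_{n_j}\,(\mathbf Z^L_{n_{j-1}})_{n_i}.$$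
   Context: For $1\le k\le n$: $B^L_k$ is the $k\times k$ matrix whose rows $1,\dots,k-1$ are rows $1,\dots,k-1$ of $A$ restricted to columns $1,\dots,k$, and whose last row is $(0,\dots,0,1)$; $\mathbf e^L=(0,\dots,0,1)^{\mathrm T}\in\mathbb R^k$, and the components of $\mathbf Z^L_k$ are indexed $1,\dots,k$. $B^R_k$ is the $(n-k+1)\times(n-k+1)$ matrix with rows and columns indexed by $k,\dots,n$, whose row $k$ is $(1,0,\dots,0)$ and whose row $m$ ($m=k+1,\dots,n$) is row $m$ of $A$ restricted to columns $k,\dots,n$; $\mathbf e^R=(1,0,\dots,0)^{\mathrm T}\in\mathbb R^{n-k+1}$, and the components of $\mathbf Z^R_k$ are indexed $k,\dots,n$. $(\mathbf V)_m$ is the $m$-th component of a vector and $(A^{-1})_{r,l}$ the $(r,l)$ entry of $A^{-1}$. *)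

(* All indices in the paper are 1-based; we access
   mathcomp matrices (0-based ordinals) through the 1-based accessor [ent]. *)
From HB Require Import structures.
From mathcomp Require Import all_boot all_order all_algebra.
Set Implicit Arguments. Unset Strict Implicit. Unset Printing Implicit Defensive.
Import Order.TTheory GRing.Theory Num.Theory.
Local Open Scope ring_scope.

Section Defs.
Variable R : comUnitRingType.

(* 1-based entry (i,j) of a matrix; 0 when out of range (never used so). *)
Definition ent {m n : nat} (A : 'M[R]_(m, n)) (i j : nat) : R :=
  match @insub _ (fun x => x < m)%N _ i.-1, @insub _ (fun x => x < n)%N _ j.-1 with
  | Some i', Some j' => A i' j'
  | _, _ => 0
  end.

Definition vcomp {m : nat} (V : 'cV[R]_m) (i : nat) : R := ent V i 1.

Definition tridiagonal {n : nat} (A : 'M[R]_n) : Prop :=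
  forall i j : 'I_n, ((i.+1 < j) || (j.+1 < i))%N -> A i j = 0.

(* B^L_k : k x k, rows 1..k-1 are rows 1..k-1 of A restricted to columns 1..k,
   last row (0,...,0,1). *)
Definition BL {n : nat} (A : 'M[R]_n) (k : nat) : 'M[R]_k :=
  \matrix_(r < k, c < k)
    if (r.+1 < k)%N then ent A r.+1 c.+1 else (c.+1 == k)%:R.

Definition eL (k : nat) : 'cV[R]_k := \col_(r < k) (r.+1 == k)%:R.

Definition ZL {n : nat} (A : 'M[R]_n) (k : nat) : 'cV[R]_k :=
  invmx (BL A k) *m eL k.

(* B^R_k : (n-k+1) x (n-k+1), rows/columns indexed k..n (local index r <-> k+r);
   row k is (1,0,...,0), row m > k is row m of A restricted to columns k..n. *)
Definition BR {n : nat} (A : 'M[R]_n) (k : nat) : 'M[R]_(n - k + 1) :=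
  \matrix_(r < n - k + 1, c < n - k + 1)
    if r == 0 :> nat then (c == 0 :> nat)%:R else ent A (k + r) (k + c).

Definition eR (m : nat) : 'cV[R]_m := \col_(r < m) (r == 0 :> nat)%:R.

Definition ZR {n : nat} (A : 'M[R]_n) (k : nat) : 'cV[R]_(n - k + 1) :=
  invmx (BR A k) *m eR (n - k + 1).

(* (Z^R_k)_m, with components indexed k..n *)
Definition compR {n : nat} (A : 'M[R]_n) (k m : nat) : R := vcomp (ZR A k) (m - k + 1).

Definition betaL {n : nat} (A : 'M[R]_n) (F : 'cV[R]_n) (N : nat -> nat) (j : nat) : R :=
  \sum_(N j.-1 <= l < N j) vcomp F l * ent (invmx A) (N j.-1) l.

Definition betaR {n : nat} (A : 'M[R]_n) (F : 'cV[R]_n) (N : nat -> nat) (j : nat) : R :=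
  \sum_(N j.-1 <= l < N j) vcomp F l * ent (invmx A) (N j) l.

End Defs.

From HB Require Import structures.
From mathcomp Require Import all_boot all_order all_algebra.
From mathcomp Require Import zify ring.
Set Implicit Arguments. Unset Strict Implicit. Unset Printing Implicit Defensive.
Import Order.TTheory GRing.Theory Num.Theory.
Local Open Scope ring_scope.

(* (X)_{n_i} = sum_l (A^-1)_{n_i,l} (F)_l; cut the range of l into the blocks
   [n_{j-1}, n_j).  A column g of A^-1 of index l satisfies A g = e_l, so every
   row of A other than row l annihilates g.  As A is tridiagonal, for l < k the
   rows k+1, ..., n only involve g_k, ..., g_n, so (g_k, ..., g_n) solves
   B^R_k Z = g_k e^R and equals g_k Z^R_k; symmetrically, for l >= k,
   (g_1, ..., g_k) = g_k Z^L_k.  In a block j <= i take k = n_j <= n_i, in a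
   block j > i take k = n_{j-1} >= n_i; summing g_k (F)_l over the block then
   produces beta^R_{n_j}, resp. beta^L_{n_j}. *)

Section Entries.
Variable R : comUnitRingType.

Lemma entE m n (A : 'M[R]_(m, n)) i j (hi : (i.-1 < m)%N) (hj : (j.-1 < n)%N) :
  ent A i j = A (Ordinal hi) (Ordinal hj).
Proof.
rewrite /ent (insubT (fun x => x < m)%N hi) (insubT (fun x => x < n)%N hj).
by congr (A _ _); apply: val_inj.
Qed.

Lemma ent_out m n (A : 'M[R]_(m, n)) i j :
  ~~ ((i.-1 < m) && (j.-1 < n))%N -> ent A i j = 0.
Proof.
rewrite negb_and => /orP [] /negbTE h; rewrite /ent.
  by rewrite (@insubF _ (fun x => (x < m)%N) _ i.-1 h).
by case: insub => // ?; rewrite (@insubF _ (fun x => (x < n)%N) _ j.-1 h).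
Qed.

Lemma ent_mulmx m n q (A : 'M[R]_(m, n)) (B : 'M[R]_(n, q)) i j :
  ent (A *m B) i j = \sum_(1 <= l < n.+1) ent A i l * ent B l j.
Proof.
rewrite big_add1 /= big_mkord.
have [/andP [hi hj]|h] := boolP ((i.-1 < m) && (j.-1 < q))%N.
  rewrite (entE _ hi hj) mxE; apply: eq_bigr => l _.
  rewrite (entE (j := l.+1) A hi (ltn_ord l)) (entE (i := l.+1) B (ltn_ord l) hj).
  by congr (A _ _ * B _ _); apply: val_inj.
rewrite ent_out // big1 // => l _.
move: h; rewrite negb_and => /orP [] h.
  by rewrite (ent_out A) ?mul0r // negb_and h.
by rewrite (ent_out B) ?mulr0 // negb_and h orbT.
Qed.

Lemma ent_1mx n i j : (0 < i <= n)%N -> (0 < j <= n)%N ->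
  ent (1%:M : 'M[R]_n) i j = (i == j)%:R.
Proof.
move=> hi hj; have hi' : (i.-1 < n)%N by lia.
have hj' : (j.-1 < n)%N by lia.
rewrite (entE _ hi' hj') mxE -val_eqE /=; congr (_ %:R); apply/eqP/eqP; lia.
Qed.

Lemma ent_tridiagonal n (A : 'M[R]_n) i j : tridiagonal A -> (0 < i)%N -> (0 < j)%N ->
  ((i.+1 < j) || (j.+1 < i))%N -> ent A i j = 0.
Proof.
move=> tA hi hj hij.
have [/andP [hi' hj']|] := boolP ((i.-1 < n) && (j.-1 < n))%N; last exact: ent_out.
rewrite (entE _ hi' hj'); apply: tA => /=; lia.
Qed.

Lemma mulmx_invmx_offdiag n (A : 'M[R]_n) m l : A \in unitmx ->
  (0 < m <= n)%N -> (0 < l <= n)%N -> m != l ->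
  \sum_(1 <= s < n.+1) ent A m s * ent (invmx A) s l = 0.
Proof.
by move=> uA hm hl ml; rewrite -ent_mulmx mulmxV // ent_1mx // (negbTE ml).
Qed.

Lemma vcomp_col m (v : nat -> R) r : (0 < r <= m)%N ->
  vcomp (\col_(i < m) v i) r = v r.-1.
Proof.
move=> hr; have hr' : (r.-1 < m)%N by lia.
by rewrite /vcomp (entE (j := 1) _ hr' (ltnSn 0)) mxE.
Qed.

Lemma vcompZ m (c : R) (V : 'cV[R]_m) r : vcomp (c *: V) r = c * vcomp V r.
Proof.
rewrite /vcomp; have [/andP [hr h1]|h] := boolP ((r.-1 < m) && (0 < 1))%N.
  by rewrite !(entE (j := 1) _ hr h1) mxE.
by rewrite !ent_out // mulr0.
Qed.

End Entries.

Section HomogeneousRows.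
Variables (R : comUnitRingType) (n : nat) (A : 'M[R]_n) (g : nat -> R).
Hypothesis tA : tridiagonal A.

Let row_dot m := \sum_(1 <= s < n.+1) ent A m s * g s.

Lemma BL_mulmx_col k : (0 < k <= n)%N ->
  (forall m, (0 < m < k)%N -> row_dot m = 0) ->
  BL A k *m \col_(r < k) g r.+1 = g k *: eL R k.
Proof.
move=> hk hg; apply/matrixP => r c; rewrite !mxE.
under eq_bigr do rewrite !mxE.
have [hr|hr] := boolP (r.+1 < k)%N.
  rewrite ltn_eqF // mulr0 -[RHS](hg r.+1); last lia.
  rewrite /row_dot (@big_cat_nat _ _ _ k.+1) /=; [|lia|lia].
  rewrite [X in _ + X]big_nat_cond [X in _ + X]big1 ?addr0 ?big_add1 ?big_mkord //.
  move=> s /andP [/andP [hs1 hs2] _]; rewrite ent_tridiagonal ?mul0r //; lia.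
have -> : r.+1 == k by apply/eqP; move: (ltn_ord r) hr => /=; lia.
have -> : \sum_(s < k) (s.+1 == k)%:R * g s.+1
    = \sum_(1 <= s < k.+1) (s == k)%:R * g s by rewrite big_add1 big_mkord.
rewrite mulr1 big_nat_recr /=; last lia.
rewrite eqxx mul1r big_nat_cond big1 ?add0r // => s /andP [/andP [_ hs] _].
by rewrite ltn_eqF ?mul0r.
Qed.

Lemma BR_mulmx_col k : (0 < k <= n)%N ->
  (forall m, (k < m <= n)%N -> row_dot m = 0) ->
  BR A k *m \col_(r < n - k + 1) g (k + r) = g k *: eR R (n - k + 1).
Proof.
move=> hk hg.
have shift (f : nat -> R) :
    \sum_(k <= s < n.+1) f s = \sum_(i < n - k + 1) f (k + i).
  rewrite -{1}(add0n k) big_addn big_mkord (_ : (n.+1 - k = n - k + 1)%N); last lia.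
  by apply: eq_bigr => i _; rewrite addnC.
apply/matrixP => r c; rewrite !mxE.
under eq_bigr do rewrite !mxE.
have [r0|r0] := eqVneq (r : nat) 0%N.
  rewrite mulr1 (eq_bigr (fun i : 'I_(n - k + 1) => ((k + i - k)%N == 0)%:R * g (k + i))).
    rewrite -(shift (fun s => ((s - k)%N == 0)%:R * g s)) big_ltn; last lia.
    rewrite subnn eqxx mul1r big_nat_cond big1 ?addr0 // => s /andP [/andP [hs _] _].
    by rewrite (_ : (s - k == 0)%N = false) ?mul0r //; apply/negbTE; lia.
  by move=> i _; rewrite addKn.
rewrite mulr0 -[RHS](hg (k + r)); last by move: (ltn_ord r); lia.
rewrite /row_dot (@big_cat_nat _ _ _ k) /=; [|lia|lia].
rewrite [X in X + _]big_nat_cond [X in X + _]big1 ?add0r ?shift //.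
move=> s /andP [/andP [hs1 hs2] _]; rewrite ent_tridiagonal ?mul0r //; lia.
Qed.

Lemma eq_scale_ZL k : (0 < k <= n)%N -> BL A k \in unitmx ->
  (forall m, (0 < m < k)%N -> row_dot m = 0) ->
  forall r, (0 < r <= k)%N -> g r = g k * vcomp (ZL A k) r.
Proof.
move=> hk uBk hg r hr.
have -> : g k * vcomp (ZL A k) r = vcomp (\col_(i < k) g i.+1) r.
  by rewrite -vcompZ /ZL scalemxAr -BL_mulmx_col // mulKmx.
by rewrite (vcomp_col (fun i => g i.+1)) // prednK //; case/andP: hr.
Qed.

Lemma eq_scale_ZR k : (0 < k <= n)%N -> BR A k \in unitmx ->
  (forall m, (k < m <= n)%N -> row_dot m = 0) ->
  forall r, (k <= r <= n)%N -> g r = g k * compR A k r.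
Proof.
move=> hk uBk hg r hr.
have -> : g k * compR A k r = vcomp (\col_(i < n - k + 1) g (k + i)) (r - k + 1).
  by rewrite /compR -vcompZ /ZR scalemxAr -BR_mulmx_col // mulKmx.
by rewrite (vcomp_col (fun i => g (k + i))); [congr g|]; lia.
Qed.

End HomogeneousRows.

Lemma big_nat_blocks (V : nmodType) (N : nat -> nat) (f : nat -> V) q :
  (forall j, (j < q)%N -> (N j <= N j.+1)%N) ->
  \sum_(N 0 <= l < N q) f l = \sum_(1 <= j < q.+1) \sum_(N j.-1 <= l < N j) f l.
Proof.
elim: q => [|q IH] hN; first by rewrite !big_geq.
have hN0q : (N 0 <= N q)%N.
  elim: q {IH} hN => // q IHq hN.
  by apply: leq_trans (IHq _) (hN _ _) => // j hj; apply: hN; lia.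
rewrite (@big_cat_nat _ _ _ (N q)) ?hN // big_nat_recr /= ?IH //.
by move=> j hj; apply: hN; lia.
Qed.

Definition increasing_partition (n p : nat) (N : nat -> nat) :=
  [/\ N 0 = 1, N p.+1 = n.+1 & forall j, (j <= p)%N -> (N j < N j.+1)%N].

Section Blocks.
Variables (R : comUnitRingType) (n p : nat) (A : 'M[R]_n) (F : 'cV[R]_n) (N : nat -> nat).
Hypotheses (tA : tridiagonal A) (uA : A \in unitmx).
Hypothesis hN : increasing_partition n p N.
Hypothesis uB : forall j, (1 <= j <= p)%N -> BL A (N j) \in unitmx /\ BR A (N j) \in unitmx.

Lemma increasing_partition_homo a b : (a <= b <= p.+1)%N -> (N a <= N b)%N.
Proof.
case: hN => _ _ hlt; elim: b => [|b IH] /andP [hab hb]; first by have -> : a = 0%N by lia.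
have [->|neq] := eqVneq a b.+1; first by [].
by apply: leq_trans (IH _) (ltnW (hlt _ _)); lia.
Qed.

Lemma increasing_partition_inner j : (1 <= j <= p)%N -> (1 < N j <= n)%N.
Proof.
case: hN => N0 Np1 hlt hj.
have := increasing_partition_homo (a := 1) (b := j); have := hlt 0%N isT.
have := increasing_partition_homo (a := j) (b := p); have := hlt p (leqnn p).
rewrite N0 Np1; lia.
Qed.

Lemma betaR_block i j : (1 <= j <= i)%N -> (i <= p)%N ->
  \sum_(N j.-1 <= l < N j) vcomp F l * ent (invmx A) (N i) l
    = betaR A F N j * compR A (N j) (N i).
Proof.
move=> hj hi; rewrite /betaR big_distrl; apply: eq_big_nat => l hl /=.
rewrite -mulrA; congr (_ * _).
have := increasing_partition_homo (a := 0) (b := j.-1).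
have := increasing_partition_homo (a := j) (b := i).
have := increasing_partition_inner (j := j); have := increasing_partition_inner (j := i).
case: hN => N0 _ _; rewrite N0 => hNi hNj hji h1j.
apply: (eq_scale_ZR (g := fun r => ent (invmx A) r l)) => //; first lia.
- by case: (uB (j := j) _); first lia.
- by move=> m hm; apply: mulmx_invmx_offdiag => //; lia.
- lia.
Qed.

Lemma betaL_block i j : (1 <= i)%N -> (i < j <= p.+1)%N ->
  \sum_(N j.-1 <= l < N j) vcomp F l * ent (invmx A) (N i) l
    = betaL A F N j * vcomp (ZL A (N j.-1)) (N i).
Proof.
move=> hi hj; rewrite /betaL big_distrl; apply: eq_big_nat => l hl /=.
rewrite -mulrA; congr (_ * _).
have := increasing_partition_homo (a := j) (b := p.+1).
have := increasing_partition_homo (a := i) (b := j.-1).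
have := increasing_partition_inner (j := j.-1); have := increasing_partition_inner (j := i).
case: hN => _ Np1 _; rewrite Np1 => hNi hNj hij hjp.
apply: (eq_scale_ZL (g := fun r => ent (invmx A) r l)) => //; first lia.
- by case: (uB (j := j.-1) _); first lia.
- by move=> m hm; apply: mulmx_invmx_offdiag => //; lia.
- lia.
Qed.

End Blocks.

Theorem theorem2 (R : realFieldType) (n : nat) (A : 'M[R]_n) (F X : 'cV[R]_n)
  (p : nat) (N : nat -> nat) :
  tridiagonal A ->
  A \in unitmx ->
  A *m X = F ->
  (1 <= p)%N ->
  (forall i, (1 <= i < p)%N -> (N i < N i.+1)%N) ->
  (1 < N 1)%N -> (N p < n)%N ->
  N 0%N = 1%N -> N p.+1 = n.+1 ->
  (forall i, (1 <= i <= p)%N -> BL A (N i) \in unitmx /\ BR A (N i) \in unitmx) ->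
  forall i, (1 <= i <= p)%N ->
    vcomp X (N i) =
      \sum_(1 <= j < i.+1) betaR A F N j * compR A (N j) (N i)
    + \sum_(i.+1 <= j < p.+2) betaL A F N j * vcomp (ZL A (N j.-1)) (N i).
Proof.
move=> tA uA AX _ Nlt N1 Np N0 Np1 uB i hi.
have hN : increasing_partition n p N.
  split=> // -[|j] hj; first by rewrite N0.
  case: (ltngtP j.+1 p) => [hjp|hjp|hjp]; [by apply: Nlt; lia | lia |].
  by rewrite -hjp in Np Np1 *; lia.
have -> : X = invmx A *m F by rewrite -AX mulKmx.
rewrite {1}/vcomp ent_mulmx.
under eq_bigr do rewrite mulrC.
have hmono j : (j < p.+1)%N -> (N j <= N j.+1)%N by case: hN => _ _ hlt /hlt/ltnW.
have := big_nat_blocks (fun l => vcomp F l * ent (invmx A) (N i) l) hmono.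
rewrite N0 Np1 => ->.
rewrite (@big_cat_nat _ _ _ i.+1) /=; [|lia|lia].
by congr (_ + _); apply: eq_big_nat => j hj;
  [apply: (betaR_block (p := p))|apply: (betaL_block (p := p))] => //; lia.
Qed.
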